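(* Assume $\mathrm{recc}(C)\subseteq\mathrm{recc}(P^B)$. Let $D\subseteq N_1\cup N_2$. If $M_D=\emptyset$, then $\mathrm{cl}\,\mathrm{conv}(P^B\setminus G_D^C)=P^B$.
   Context: Let $A\in\mathbb{R}^{m\times n}$ have full row rank, $b\in\mathbb{R}^m$, and $P=\{x\in\mathbb{R}^n_+:Ax=b\}$. Let $C\subseteq\mathbb{R}^n$ be an open convex set. Fix a basis $B$ of $P$ with nonbasic set $N=\{1,\dots,n\}\setminus B$. Write $P=\{x:x_i=\bar b_i-\sum_{j\in N}\bar a_{ij}x_j\ (i\in B),\ x\ge0\}$ with $\bar b\ge0$. The basic solution $\bar x$ has $\bar x_i=\bar b_i$ ($i\in B$) and $0$ ($i\in N$). $P^B$ is obtained by dropping $x_i\ge0$ for $i\in B$. For $j\in N$, $\bar r^j$ has $\bar r^j_k=-\bar a_{kj}$ ($k\in B$), $\bar r^j_j=1$, and $0$ otherwise. Thus $P^B=\{\bar x+\sum_{j\in N}x_j\bar r^j:x_j\ge0\}$. It is assumed that $\bar x\notin\mathrm{cl}(C)$. For $j\in N$, $\alpha_j=\inf\{\lambda\ge0:\bar x+\lambda\bar r^j\in C\}$ and $\beta_j=\sup\{\lambda\ge0:\bar x+\lambda\bar r^j\in C\}$, with $\alpha_j=+\infty$, $\beta_j=-\infty$ if the halfline misses $C$. Define - $N_1=\{j:\alpha_j\in(0,\infty),\beta_j=+\infty\}$; - $N_2=\{j:\alpha_j\in(0,\infty),\beta_j\in(\alpha_j,\infty)\}$. For a set $K$, $\mathrm{recc}(K)=\{d:x+\lambda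 d\in K\ \forall x\in K,\lambda\ge0\}$. $G_D^C=\{\bar x\}+\mathrm{conv}\big(\bigcup_{j\in D}\{\lambda\bar r^j:\lambda>\alpha_j\}\big)+\mathrm{recc}(C)$. For $(i,j)\in D\times(N\setminus D)$, $\gamma_{ij}=\sup\{\gamma\ge0:\alpha_i\bar r^i+\gamma\bar r^j\in\mathrm{recc}(G_D^C)\}$. Let $M_D=\{i\in D:\gamma_{ij}>0\ \forall j\in N\setminus D\}$. Here $\mathrm{cl}\,\mathrm{conv}$ is the closure of the convex hull. *)

From mathcomp Require Import all_boot all_order all_algebra.
From mathcomp Require Import all_classical all_reals all_analysis.
Import numFieldNormedType.Exports.
Import Order.TTheory GRing.Theory Num.Theory.
Set Implicit Arguments. Unset Strict Implicit. Unset Printing Implicit Defensive.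
Local Open Scope classical_set_scope.
Local Open Scope ring_scope.

Section Generic.
Variables (R : realType) (n : nat).
Implicit Types (S T K : set 'cV[R]_n).

Definition convex_set_cv S : Prop :=
  forall x y, S x -> S y -> forall t : R, 0 <= t -> t <= 1 ->
    S (t *: x + (1 - t) *: y).

Definition conv_hull S : set 'cV[R]_n :=
  [set x | forall T, convex_set_cv T -> S `<=` T -> T x].

Definition msum S T : set 'cV[R]_n :=
  [set z | exists x, S x /\ exists y, T y /\ z = x + y].

Definition recc K : set 'cV[R]_n :=
  [set d | forall x, K x -> forall l : R, 0 <= l -> K (x + l *: d)].
End Generic.

Section Tableau.
Variables (R : realType) (m n : nat) (A : 'M[R]_(m, n)) (b : 'cV[R]_m)
  (sigma : 'I_m -> 'I_n).

Definition Bset : set 'I_n := range sigma.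
Definition Nset : set 'I_n := ~` Bset.

Definition AB : 'M[R]_m := \matrix_(i, k) A i (sigma k).

Definition is_basis : Prop := injective sigma /\ AB \in unitmx.

Definition bbar : 'cV[R]_m := invmx AB *m b.
(* abar k j = \bar a_{sigma k, j} *)
Definition abar : 'M[R]_(m, n) := invmx AB *m A.

Definition feasible_basis : Prop := is_basis /\ forall k, 0 <= bbar k 0.

Definition xbar : 'cV[R]_n :=
  \col_i \sum_(k < m | sigma k == i) bbar k 0.

Definition rbar (j : 'I_n) : 'cV[R]_n :=
  \col_i ((i == j)%:R - \sum_(k < m | sigma k == i) abar k j).

(* P^B: tableau description of P with x_i >= 0 dropped for i in B *)
Definition PB : set 'cV[R]_n :=
  [set x | (forall k : 'I_m,
              x (sigma k) 0 = bbar k 0 - \sum_(j < n | j \in Nset) abar k j * x j 0)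
           /\ (forall j, Nset j -> 0 <= x j 0)].

Variable C : set 'cV[R]_n.

Definition ray_params (j : 'I_n) : set R :=
  [set l | 0 <= l /\ C (xbar + l *: rbar j)].

Definition alpha (j : 'I_n) : \bar R := ereal_inf [set l%:E | l in ray_params j].
Definition beta (j : 'I_n) : \bar R := ereal_sup [set l%:E | l in ray_params j].

Definition N1 : set 'I_n :=
  [set j | Nset j /\ (0 < alpha j)%E /\ (alpha j < +oo)%E /\ beta j = +oo%E].
Definition N2 : set 'I_n :=
  [set j | Nset j /\ (0 < alpha j)%E /\ (alpha j < +oo)%E /\
           (alpha j < beta j)%E /\ (beta j < +oo)%E].

Definition G_DC (D : set 'I_n) : set 'cV[R]_n :=
  msum (msum [set xbar]
     (conv_hull (\bigcup_(j in D) [set l *: rbar j | l in [set l : R | (alpha j < l%:E)%E]])))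
     (recc C).

Definition gamma (D : set 'I_n) (i j : 'I_n) : \bar R :=
  ereal_sup [set g%:E | g in
     [set g : R | 0 <= g /\ recc (G_DC D) (fine (alpha i) *: rbar i + g *: rbar j)]].

Definition M_D (D : set 'I_n) : set 'I_n :=
  [set i | D i /\ forall j, Nset j -> ~ D j -> (0 < gamma D i j)%E].
End Tableau.

(* P^B is closed and convex, which gives one inclusion.  Since M_D is empty,
   every i in D has a partner phi i in N \ D with gamma_{i, phi i} <= 0.  Every
   point of G_D^C has a positive coordinate in D, and a point
   xbar + a r^i + c r^(phi i) with c > 0 is not in G_D^C either, for otherwise
   its recession part would give a direction alpha_i r^i + g r^(phi i) of
   recc(G_D^C) with g > 0.  Hence xbar and the points xbar + l r^j + s r^(phi j)
   lie in P^B \ G_D^C; for x in P^B a suitable average of them is x + s w, and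
   letting s -> 0 puts x in the closure of the convex hull. *)

From Pilot Require Import Defs.
From mathcomp Require Import all_boot all_order all_algebra.
From mathcomp Require Import all_classical all_reals all_analysis.
From mathcomp Require Import ring lra.
Import numFieldNormedType.Exports.
Import Order.TTheory GRing.Theory Num.Theory.
Set Implicit Arguments. Unset Strict Implicit. Unset Printing Implicit Defensive.
Local Open Scope classical_set_scope.
Local Open Scope ring_scope.

Lemma closure_shift (R : realType) (V : normedModType R) (S : set V) (x w : V) :
  (forall s : R, 0 < s -> S (x + s *: w)) -> closure S x.
Proof.
move=> Sxw B /nbhs_ballP[e e0 eB].
have w1 : 0 < `|w| + 1 by rewrite ltr_pwDr.
have s0 : 0 < e / (`|w| + 1) by exact: divr_gt0.
exists (x + (e / (`|w| + 1)) *: w); split; first exact: Sxw.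
apply: eB; rewrite -ball_normE /ball_ /= opprD addrA subrr add0r normrN normrZ.
by rewrite gtr0_norm // mulrAC ltr_pdivrMr // ltr_pM2l // ltrDl.
Qed.

Lemma mean_translates (R : numFieldType) (V : lmodType R) (n : nat)
    (x0 : V) (u v : 'I_n -> V) (s : R) :
  n.+1%:R^-1 *: (x0 + \sum_(j <- enum 'I_n) (x0 + n.+1%:R *: u j + s *: v j)) =
  x0 + \sum_j u j + s *: (n.+1%:R^-1 *: \sum_j v j).
Proof.
have n1 : n.+1%:R != 0 :> R by rewrite pnatr_eq0.
rewrite big_enum /= !big_split /= sumr_const card_ord -!scaler_sumr.
rewrite !addrA -mulrS -(scaler_nat n.+1 x0) !scalerDr !scalerA mulVf //.
by rewrite !scale1r mulrC.
Qed.

Lemma coord_lin_continuous (R : realType) (n : nat) (i : 'I_n) (P : pred 'I_n)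
    (a : 'I_n -> R) :
  continuous (fun x : 'cV[R]_n => x i 0 + \sum_(j < n | P j) a j * x j 0).
Proof.
move=> x; apply: continuousD; first exact: coord_continuous.
apply: (@continuous_big R^o _ +%R 0 P add_continuous _ _
  (fun j (x : 'cV[R]_n) => a j * x j 0)).
by move=> j _ y; apply: continuousM; [exact: cst_continuous|exact: coord_continuous].
Qed.

Section Convexity.
Variables (R : realType) (n : nat).
Implicit Types (S T K : set 'cV[R]_n) (x y d : 'cV[R]_n).

Lemma entryD x y i : (x + y) i 0 = x i 0 + y i 0.
Proof. by rewrite mxE. Qed.

Lemma entryN x i : (- x) i 0 = - x i 0.
Proof. by rewrite mxE. Qed.

Lemma entryZ (a : R) x i : (a *: x) i 0 = a * x i 0.
Proof. by rewrite mxE. Qed.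

Lemma conv_hull_convex S : convex_set_cv (conv_hull S).
Proof.
by move=> x y Sx Sy t t0 t1 T cT ST; apply: cT (Sx T cT ST) (Sy T cT ST) t t0 t1.
Qed.

Lemma sub_conv_hull S : S `<=` conv_hull S.
Proof. by move=> x Sx T _; apply. Qed.

Lemma conv_hull_min S T : convex_set_cv T -> S `<=` T -> conv_hull S `<=` T.
Proof. by move=> cT ST x; apply. Qed.

Lemma convex_set_avg (I : Type) T (y0 : 'cV[R]_n) (y : I -> 'cV[R]_n) :
  convex_set_cv T -> T y0 -> (forall j, T (y j)) ->
  forall s : seq I, T ((size s).+1%:R^-1 *: (y0 + \sum_(j <- s) y j)).
Proof.
move=> cT T0 Ty; elim=> [|a s IH]; first by rewrite big_nil addr0 invr1 scale1r.
rewrite big_cons /=; set k := size s.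
have k1 : (0 : R) < k.+1%:R by rewrite ltr0Sn.
have k2 : (0 : R) < k.+2%:R by rewrite ltr0Sn.
have -> : k.+2%:R^-1 *: (y0 + (y a + \sum_(j <- s) y j)) =
    k.+2%:R^-1 *: y a + (1 - k.+2%:R^-1) *: (k.+1%:R^-1 *: (y0 + \sum_(j <- s) y j)).
  rewrite scalerA [(1 - _) * _](_ : _ = k.+2%:R^-1); first by rewrite -scalerDr addrCA.
  rewrite -[k.+2]addn1 natrD -[k.+1]addn1 natrD.
  have k0 := ler0n R k; field; apply/andP; split; apply: lt0r_neq0; lra.
by apply: cT => //; rewrite invf_le1 // ler1n.
Qed.

Lemma reccD K d1 d2 : recc K d1 -> recc K d2 -> recc K (d1 + d2).
Proof.
by move=> h1 h2 x Kx l l0; rewrite scalerDr addrA; apply: h2 (h1 x Kx l l0) l l0.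
Qed.

Lemma reccZ K (c : R) d : 0 <= c -> recc K d -> recc K (c *: d).
Proof.
by move=> c0 h x Kx l l0; rewrite scalerA; apply: h => //; apply: mulr_ge0.
Qed.

Lemma recc_recc K : recc K `<=` recc (recc K).
Proof. by move=> d Kd k Kk l l0; apply: reccD Kk (reccZ l0 Kd). Qed.

Lemma recc_msuml S T : recc S `<=` recc (Defs.msum S T).
Proof.
move=> d Sd _ [x [Sx [y [Ty ->]]]] l l0.
by exists (x + l *: d); split; [apply: Sd | exists y; split; rewrite // addrAC].
Qed.

Lemma recc_msumr S T : recc T `<=` recc (Defs.msum S T).
Proof.
move=> d Td _ [x [Sx [y [Ty ->]]]] l l0.
by exists x; split => //; exists (y + l *: d); split; [apply: Td | rewrite addrA].
Qed.

(* y + l d is a convex combination of the far ray point (a + l + 1) d and the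
   dilate (1 - s)^-1 y. *)
Lemma recc_conv_hull_ray S d (a : R) :
  0 <= a -> (forall y t, S y -> 1 <= t -> S (t *: y)) ->
  (forall l, a < l -> S (l *: d)) -> recc (conv_hull S) d.
Proof.
move=> a0 S_dilate S_ray.
suff : conv_hull S `<=` [set q | forall l, 0 <= l -> conv_hull S (q + l *: d)].
  by move=> h q /h.
apply: conv_hull_min => [x y hx hy t t0 t1 l l0|y Sy l].
  have -> : t *: x + (1 - t) *: y + l *: d =
      t *: (x + l *: d) + (1 - t) *: (y + l *: d).
    by rewrite !scalerDr !scalerA addrACA -scalerDl; congr (_ + _ *: _); ring.
  exact: conv_hull_convex (hx l l0) (hy l l0) t t0 t1.
rewrite le0r => /predU1P[->|l0]; first by rewrite scale0r addr0; apply: sub_conv_hull.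
have al0 : 0 < a + l + 1 by lra.
set s := l / (a + l + 1).
have s0 : 0 < s by apply: divr_gt0.
have s1 : s < 1 by rewrite ltr_pdivrMr //; lra.
have -> : y + l *: d = s *: ((a + l + 1) *: d) + (1 - s) *: ((1 - s)^-1 *: y).
  by rewrite !scalerA mulfV ?subr_eq0 ?gt_eqF // scale1r addrC /s mulfVK ?gt_eqF.
apply: conv_hull_convex; rewrite ?ltW //; apply: sub_conv_hull.
- by apply: S_ray; lra.
- by apply: S_dilate; rewrite // invf_ge1 ?subr_gt0 // lerBlDr lerDl ltW.
Qed.

End Convexity.

Section Tableau.
Variables (R : realType) (m n : nat) (A : 'M[R]_(m, n)) (b : 'cV[R]_m)
  (sigma : 'I_m -> 'I_n).
Hypothesis sigma_inj : injective sigma.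

Local Notation xb := (xbar A b sigma).
Local Notation rb := (rbar A sigma).
Local Notation ab := (abar A sigma).
Local Notation bb := (bbar A b sigma).
Local Notation NN := (Nset sigma).
Local Notation PP := (PB A b sigma).

Lemma Nset_neq j k : NN j -> sigma k != j.
Proof. by move=> Nj; apply/eqP => kj; apply: Nj; exists k. Qed.

Lemma not_Nset j : ~ NN j -> exists k, sigma k = j.
Proof. by move=> /contrapT[k _ kj]; exists k. Qed.

Lemma sum_basic_Nset j (F : 'I_m -> R) : NN j -> \sum_(k | sigma k == j) F k = 0.
Proof. by move=> Nj; rewrite big_pred0 // => k; apply/negbTE/Nset_neq. Qed.

Lemma sum_basic_sigma k0 (F : 'I_m -> R) : \sum_(k | sigma k == sigma k0) F k = F k0.
Proof. by rewrite (big_pred1 k0) // => k /=; apply/eqP/eqP => [/sigma_inj|->]. Qed.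

Lemma xbar_Nset j : NN j -> xb j 0 = 0.
Proof. by move=> Nj; rewrite mxE sum_basic_Nset. Qed.

Lemma xbar_sigma k : xb (sigma k) 0 = bb k 0.
Proof. by rewrite mxE sum_basic_sigma. Qed.

Lemma rbar_Nset j l : NN l -> rb j l 0 = (l == j)%:R.
Proof. by move=> Nl; rewrite mxE sum_basic_Nset // subr0. Qed.

Lemma rbar_sigma j k : NN j -> rb j (sigma k) 0 = - ab k j.
Proof. by move=> Nj; rewrite mxE sum_basic_sigma (negbTE (Nset_neq k Nj)) sub0r. Qed.

Lemma sum_Nset_delta (f : 'I_n -> R) j : NN j ->
  \sum_(l < n | l \in NN) f l * (l == j)%:R = f j.
Proof.
move=> Nj; rewrite (bigD1 j) ?in_setE //= eqxx mulr1 big1 ?addr0 //.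
by move=> l /andP[_ /negbTE ->]; rewrite mulr0.
Qed.

Definition hom_tableau (d : 'cV[R]_n) :=
  forall k, d (sigma k) 0 = - \sum_(j < n | j \in NN) ab k j * d j 0.

Lemma hom_tableau_rbar_sum d :
  hom_tableau d -> d = \sum_(j < n | j \in NN) d j 0 *: rb j.
Proof.
move=> hd; apply/matrixP => i z; rewrite [z]ord1 summxE.
have [Ni|/not_Nset[k <-]] := pselect (NN i).
  rewrite (eq_bigr (fun j => d j 0 * (j == i)%:R)) ?sum_Nset_delta // => j.
  by rewrite in_setE => Nj; rewrite entryZ rbar_Nset // eq_sym.
rewrite hd -sumrN; apply: eq_bigr => j; rewrite in_setE => Nj.
by rewrite entryZ rbar_sigma // mulrN mulrC.
Qed.

Lemma hom_tableau_support2 d i j : hom_tableau d -> NN i -> NN j -> i != j ->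
  (forall l, NN l -> l != i -> l != j -> d l 0 = 0) ->
  d = d i 0 *: rb i + d j 0 *: rb j.
Proof.
move=> hd Ni Nj ij d0; rewrite {1}(hom_tableau_rbar_sum hd).
rewrite (bigD1 i) ?in_setE //= (bigD1 j) /=; last by rewrite eq_sym ij andbT in_setE.
rewrite addrA big1 ?addr0 //.
by move=> l /andP[/andP[Nl li] lj]; rewrite d0 ?scale0r // -in_setE.
Qed.

Lemma xbar_PB : PP xb.
Proof.
split => [k|j Nj]; last by rewrite xbar_Nset.
by rewrite xbar_sigma big1 ?subr0 // => j; rewrite in_setE => Nj; rewrite xbar_Nset ?mulr0.
Qed.

Lemma PB_add_rbar x j l : PP x -> NN j -> 0 <= l -> PP (x + l *: rb j).
Proof.
move=> [x_eq x_ge0] Nj l0; split => [k|i Ni].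
  rewrite (eq_bigr (fun i => ab k i * x i 0 + l * (ab k i * (i == j)%:R))); last first.
    by move=> i; rewrite in_setE => Ni; rewrite entryD entryZ rbar_Nset //; ring.
  rewrite entryD entryZ x_eq rbar_sigma // big_split /= -mulr_sumr sum_Nset_delta //.
  ring.
rewrite entryD entryZ rbar_Nset //; apply: addr_ge0; first exact: x_ge0.
by apply: mulr_ge0 => //; case: (i == j).
Qed.

Lemma recc_PB_ge0 d j : recc PP d -> NN j -> 0 <= d j 0.
Proof.
move=> /(_ xb xbar_PB 1 ler01)[_ h] Nj.
by have := h j Nj; rewrite entryD xbar_Nset // scale1r add0r.
Qed.

Lemma recc_PB_hom d : recc PP d -> hom_tableau d.
Proof.
move=> /(_ xb xbar_PB 1 ler01)[h _] k; apply: (addrI (bb k 0)).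
move: (h k); rewrite entryD xbar_sigma scale1r => ->; congr (_ - _).
by apply: eq_bigr => j; rewrite in_setE => Nj; rewrite entryD xbar_Nset // add0r.
Qed.

Lemma PB_decomp x : PP x -> x = xb + \sum_(j < n | j \in NN) x j 0 *: rb j.
Proof.
move=> [x_eq _].
have hx : hom_tableau (x - xb).
  move=> k; rewrite entryD entryN xbar_sigma x_eq addrAC subrr add0r; congr (- _).
  by apply: eq_bigr => j; rewrite in_setE => Nj; rewrite entryD entryN xbar_Nset // subr0.
rewrite -[x in LHS](subrK xb) addrC (hom_tableau_rbar_sum hx); congr (_ + _).
by apply: eq_bigr => j; rewrite in_setE => Nj; rewrite entryD entryN xbar_Nset // subr0.
Qed.

Lemma PB_convex : convex_set_cv PP.
Proof.
move=> x y [x_eq x_ge0] [y_eq y_ge0] t t0 t1; split => [k|j Nj].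
  have -> : \sum_(j < n | j \in NN) ab k j * (t *: x + (1 - t) *: y) j 0 =
      t * \sum_(j < n | j \in NN) ab k j * x j 0
      + (1 - t) * \sum_(j < n | j \in NN) ab k j * y j 0.
    by rewrite !mulr_sumr -big_split; apply: eq_bigr => j _; rewrite entryD !entryZ /=; ring.
  by rewrite entryD !entryZ x_eq y_eq; ring.
rewrite entryD !entryZ; apply: addr_ge0; apply: mulr_ge0;
  [done|exact: x_ge0|lra|exact: y_ge0].
Qed.

Lemma PB_closed : closed PP.
Proof.
have -> : PP =
    \bigcap_k ((fun x : 'cV[R]_n =>
                  x (sigma k) 0 + \sum_(j < n | j \in NN) ab k j * x j 0)
                 @^-1` [set r | r = bb k 0])
    `&` \bigcap_(j in NN) ((fun x : 'cV[R]_n => x j 0) @^-1` [set r | 0 <= r]).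
  apply/seteqP; split => [x [x_eq x_ge0]|x [/= x_eq x_ge0]]; split => //=.
  - by move=> k _ /=; rewrite x_eq subrK.
  - by move=> k; rewrite -(x_eq k I) addrK.
apply: closedI; apply: closed_bigI => i _.
- by apply: preimage_closed => [x _|]; [apply: coord_lin_continuous|apply: closed_eq].
- by apply: preimage_closed => [x _|]; [apply: coord_continuous|apply: closed_ge].
Qed.

Variables (C : set 'cV[R]_n) (D : set 'I_n).
Hypothesis reccC_PB : recc C `<=` recc PP.
Hypothesis D_N12 : D `<=` N1 A b sigma C `|` N2 A b sigma C.

Local Notation al := (alpha A b sigma C).
Local Notation G := (G_DC A b sigma C D).
Local Notation rays :=
  (\bigcup_(j in D) [set l *: rb j | l in [set l : R | (al j < l%:E)%E]]).

Lemma alpha_pos_fin j : D j -> [/\ NN j, 0 < fine (al j) & al j = (fine (al j))%:E].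
Proof.
by move=> /D_N12[|] [Nj [a0 [aoo _]]]; split;
  rewrite // ?fine_gt0 ?a0 ?aoo // fineK // gt0_fin_numE.
Qed.

Lemma conv_rays_coord q : conv_hull rays q ->
  [/\ forall l, NN l -> 0 <= q l 0, forall l, NN l -> ~ D l -> q l 0 = 0
    & exists l, [/\ NN l, D l & 0 < q l 0]].
Proof.
move: q; apply: conv_hull_min => [x y [x_ge0 x_offD [l [Nl Dl xl]]]
  [y_ge0 y_offD [l' [Nl' Dl' yl]]] t t0 t1|].
  split => [k Nk|k Nk nDk|].
  - by rewrite entryD !entryZ addr_ge0 // mulr_ge0 ?x_ge0 ?y_ge0 // subr_ge0.
  - by rewrite entryD !entryZ x_offD // y_offD // !mulr0 addr0.
  move: t0; rewrite le0r => /predU1P[->|t0].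
    by exists l'; split; rewrite // entryD !entryZ mul0r add0r subr0 mul1r.
  exists l; split; rewrite // entryD !entryZ ltr_pwDl ?mulr_gt0 //.
  by rewrite mulr_ge0 ?y_ge0 // subr_ge0.
move=> _ [j Dj [mu al_mu <-]].
have [Nj a0 aE] := alpha_pos_fin Dj.
have mu0 : 0 < mu by move: al_mu; rewrite /= aE lte_fin; apply: lt_trans.
split => [k Nk|k Nk nDk|].
- by rewrite entryZ rbar_Nset // mulr_ge0 ?ler0n ?ltW.
- by rewrite entryZ rbar_Nset //; case: eqP => [kj|]; [rewrite kj in nDk|rewrite mulr0].
- by exists j; split; rewrite // entryZ rbar_Nset // eqxx mulr1.
Qed.

Lemma recc_G_DC_rbar i : D i -> recc G (rb i).
Proof.
move=> Di; have [_ a0 aE] := alpha_pos_fin Di.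
apply: recc_msuml; apply: recc_msumr.
apply: (@recc_conv_hull_ray _ _ _ _ (fine (al i)))
  => [|_ t [j Dj [mu al_mu <-]] t1|l al_l].
- exact: ltW.
- exists j => //; exists (t * mu); last by rewrite scalerA.
  have [_ aj0 ajE] := alpha_pos_fin Dj.
  move: al_mu; rewrite /= ajE !lte_fin => al_mu.
  by rewrite (lt_le_trans al_mu) // ler_peMl // ltW // (lt_trans aj0).
- by exists i => //; exists l; rewrite //= aE lte_fin.
Qed.

Lemma recc_C_G_DC : recc C `<=` recc G.
Proof. by move=> d /recc_recc; apply: recc_msumr. Qed.

Lemma G_DC_pos_coord z : G z -> exists l, [/\ NN l, D l & 0 < z l 0].
Proof.
move=> [_ [[_ [-> [q [q_conv ->]]]] [k [Ck ->]]]].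
have [_ _ [l [Nl Dl ql]]] := conv_rays_coord q_conv.
exists l; split; rewrite // !entryD xbar_Nset // add0r ltr_pwDl //.
exact: recc_PB_ge0 (reccC_PB Ck) Nl.
Qed.

(* Writing the point as xbar + q + k, the coordinates force k = t r^i + c r^j,
   so (alpha_i / (t + alpha_i)) (k + alpha_i r^i) = alpha_i r^i + g r^j is a
   recession direction of G_D^C with g > 0. *)
Lemma G_DC_gamma_gt0 i j a c : D i -> NN j -> ~ D j -> 0 <= a -> 0 < c ->
  G (xb + a *: rb i + c *: rb j) -> (0 < gamma A b sigma C D i j)%E.
Proof.
move=> Di Nj nDj a0 c0 [_ [[_ [-> [q [q_conv ->]]]] [k [Ck E]]]].
have [Ni ai0 _] := alpha_pos_fin Di.
have [q_ge0 q_offD _] := conv_rays_coord q_conv.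
have k_ge0 := recc_PB_ge0 (reccC_PB Ck).
have ij : i != j by apply: contra_notN nDj => /eqP <-.
have coord l : NN l -> a * (l == i)%:R + c * (l == j)%:R = q l 0 + k l 0.
  move=> Nl; have := congr1 (fun v : 'cV[R]_n => v l 0) E.
  by rewrite /= !entryD !entryZ !rbar_Nset // xbar_Nset // !add0r.
have kE : k = k i 0 *: rb i + c *: rb j.
  have kj : k j 0 = c.
    by have := coord j Nj; rewrite eqxx eq_sym (negbTE ij) q_offD // mulr0 mulr1 !add0r.
  rewrite -kj; apply: hom_tableau_support2 (recc_PB_hom (reccC_PB Ck)) Ni Nj ij _.
  move=> l Nl /negbTE li /negbTE lj; have := coord l Nl; rewrite li lj !mulr0 addr0.
  by have := q_ge0 l Nl; have := k_ge0 l Nl; lra.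
move: (k i 0) (k_ge0 i Ni) kE => t t0 kE.
set ai := fine (al i).
have tai : 0 < t + ai := ltr_wpDl t0 ai0.
pose g := ai / (t + ai) * c.
have g0 : 0 < g by rewrite mulr_gt0 // divr_gt0.
have recc_g : recc G (ai *: rb i + g *: rb j).
  have -> : ai *: rb i + g *: rb j = (ai / (t + ai)) *: (k + ai *: rb i).
    rewrite kE !scalerDr !scalerA addrAC -scalerDl; congr (_ *: _ + _).
    by field; rewrite gt_eqF.
  apply: reccZ; first by rewrite ltW // divr_gt0.
  apply: reccD; first exact: recc_C_G_DC.
  by apply: reccZ (recc_G_DC_rbar Di); rewrite ltW.
apply: (@lt_le_trans _ _ g%:E); first by rewrite lte_fin.
by apply: ereal_sup_ubound; exists g => //; split; first exact: ltW.
Qed.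

Variable phi : 'I_n -> 'I_n.
Hypothesis phi_gamma : forall i, D i ->
  [/\ NN (phi i), ~ D (phi i) & ~ (0 < gamma A b sigma C D i (phi i))%E].

Lemma xbar_PB_not_G_DC : (PP `\` G) xb.
Proof.
split; first exact: xbar_PB.
by move=> /G_DC_pos_coord[l [Nl _]]; rewrite xbar_Nset // ltxx.
Qed.

Lemma ray_PB_not_G_DC j l s : NN j -> 0 <= l -> 0 < s ->
  (PP `\` G) (xb + l *: rb j + (s * (j \in D)%:R) *: rb (phi j)).
Proof.
move=> Nj l0 s0; have PBj := PB_add_rbar xbar_PB Nj l0.
have [jD|jD] := boolP (j \in D).
  have Dj : D j by rewrite -in_setE.
  have [Nphi nDphi not_gamma] := phi_gamma Dj.
  rewrite mulr1; split; first exact: PB_add_rbar PBj Nphi (ltW s0).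
  by move/(G_DC_gamma_gt0 Dj Nphi nDphi l0 s0).
rewrite mulr0 scale0r addr0; split => // /G_DC_pos_coord[i [Ni Di]].
rewrite entryD entryZ xbar_Nset // rbar_Nset // add0r.
have -> : (i == j) = false by apply: contraNF jD => /eqP <-; rewrite in_setE.
by rewrite mulr0 ltxx.
Qed.

Lemma PB_sub_closure_conv : PP `<=` closure (conv_hull (PP `\` G)).
Proof.
move=> x Px.
pose c j := if j \in NN then x j 0 else 0.
pose e j := if j \in NN then (j \in D)%:R else 0 : R.
apply: (@closure_shift _ _ _ _ (n.+1%:R^-1 *: \sum_j e j *: rb (phi j))) => s s0.
have x_decomp : x = xb + \sum_j c j *: rb j.
  rewrite {1}(PB_decomp Px) big_mkcond /=; congr (_ + _).
  by apply: eq_bigr => j _; rewrite /c; case: ifP; rewrite ?scale0r.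
rewrite {1}x_decomp -mean_translates -[n in n.+1%:R^-1]size_enum_ord.
apply: (convex_set_avg
    (y := fun j => xb + n.+1%:R *: (c j *: rb j) + s *: (e j *: rb (phi j))))
  => [||j]; [exact: conv_hull_convex|exact: sub_conv_hull xbar_PB_not_G_DC|].
apply: sub_conv_hull; rewrite !scalerA /c /e.
have [Nj|_] := boolP (j \in NN); last first.
  by rewrite !mulr0 !scale0r !addr0; apply: xbar_PB_not_G_DC.
rewrite in_setE in Nj; apply: ray_PB_not_G_DC => //.
by rewrite mulr_ge0 //; apply: Px.2.
Qed.

End Tableau.

Theorem proposition4 (R : realType) (m n : nat) (A : 'M[R]_(m, n)) (b : 'cV[R]_m)
  (sigma : 'I_m -> 'I_n) (C : set 'cV[R]_n) (D : set 'I_n) :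
  \rank A = m ->
  feasible_basis A b sigma ->
  open C -> convex_set_cv C ->
  ~ closure C (xbar A b sigma) ->
  recc C `<=` recc (PB A b sigma) ->
  D `<=` N1 A b sigma C `|` N2 A b sigma C ->
  M_D A b sigma C D = set0 ->
  closure (conv_hull (PB A b sigma `\` G_DC A b sigma C D)) = PB A b sigma.
Proof.
move=> _ [[sigma_inj _] _] _ _ _ reccC_PB D_N12 M_D0.
have /choice[phi phi_gamma] : forall i, exists j, D i ->
    [/\ Nset sigma j, ~ D j & ~ (0 < gamma A b sigma C D i j)%E].
  move=> i.
  have [Di|nDi] := pselect (D i); last by exists i.
  have : ~ M_D A b sigma C D i by rewrite M_D0.
  move=> /not_andP[//|/existsNP[j /not_implyP[Nj /not_implyP[nDj not_gamma]]]].
  by exists j.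
apply/seteqP; split; last exact: PB_sub_closure_conv phi_gamma.
apply: subset_trans (@PB_closed _ _ _ A b sigma); apply: closureS.
by apply: conv_hull_min => [|x []]; first exact: PB_convex.
Qed.
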